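(* There exists a game $\mathcal G=(G,\Pi,T,s_0)$ and a collective strategy $\bar\tau_\Pi$ such that $$\inf_{\sigma_{\mathsf O}\ \text{memoryless}}\mathbb P_{(\bar\tau_\Pi,\sigma_{\mathsf O})}(\text{reach }T)\;>\;\sup_{\bar\sigma_\Pi\ \text{memoryless}}\ \inf_{\sigma_{\mathsf O}\ \text{memoryless}}\mathbb P_{(\bar\sigma_\Pi,\sigma_{\mathsf O})}(\text{reach }T),$$ i.e. against an opponent restricted to memoryless strategies, the team can achieve a strictly higher guaranteed probability of reaching the target with a strategy using memory than with any memoryless collective strategy.
   Context: A game structure is $G=(\Sigma,S,(A_p)_{p\in\Sigma},(\mathsf{Av}_p)_{p\in\Sigma},\delta)$ with players $\Sigma$, a finite set $S$ of states, finite action sets $A_p$, nonempty available-action sets $\mathsf{Av}_p(s)\subseteq A_p$, and a transition function $\delta$ mapping a state and an available action profile to a probability distribution on $S$. A game is $(G,\Pi,T,s_0)$ with team $\Pi\subseteq\Sigma$, absorbing target set $T\subseteq S$, initial state $s_0$; $\Sigma\setminus\Pi=\{\mathsf O\}$ (the opponent). A strategy for $p$ maps each history (nonempty finite sequence of states) ending in $s$ to a distribution over $\mathsf{Av}_p(s)$; memoryless means it depends only on the last state. A collective strategy is a tuple of strategies of the team players, who randomise independently (joint action probability is the product of the individual probabilities). A complete strategy profile induces a probability measure $\mathbb P$ on plays from $s_0$; ''reach $T$'' is the event that the play visits $T$. *)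

From HB Require Import structures.
From mathcomp Require Import all_boot all_order all_algebra.
From mathcomp Require Import boolp classical_sets reals.
Set Implicit Arguments. Unset Strict Implicit. Unset Printing Implicit Defensive.
Import Order.TTheory GRing.Theory Num.Theory.
Local Open Scope ring_scope.

Section Games.
Variable R : realType.

Definition isdist (X : finType) (d : {ffun X -> R}) : Prop :=
  (forall x, 0 <= d x) /\ \sum_(x : X) d x = 1.

(* A game (G, Pi, T, s0) with two-sided players: the team Pi is indexed by
   the finite type [team]; the single opponent O is separate, so that
   Sigma \ Pi = {O}.  All players draw actions from one finite type [act]
   (the union of the A_p); the available actions Av_p(s) select the actual
   action set of each player.  [opp] is the opponent's Av. *)
Record game := Game {
  team : finType;
  state : finType;
  act : finType;
  av_team : team -> state -> {set act};
  av_opp : state -> {set act};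
  delta : state -> {ffun team -> act} -> act -> {ffun state -> R};
  target : {set state};
  s0 : state
}.

Definition available_profile (g : game) (s : state g)
  (f : {ffun team g -> act g}) (b : act g) : bool :=
  [forall i, f i \in av_team i s] && (b \in av_opp s).

Definition wf_game (g : game) : Prop :=
  (forall (i : team g) (s : state g), (0 < #|av_team i s|)%N) /\
  (forall s : state g, (0 < #|av_opp s|)%N) /\
  (forall (s : state g) f b, available_profile s f b -> isdist (delta s f b)) /\
  (forall s f b s', s \in target g -> available_profile s f b ->
      s' \notin target g -> delta s f b s' = 0).

(* A strategy maps a history, given as the list of earlier states [h] together
   with its last state [s], to a distribution over actions. *)
Definition strat (g : game) := seq (state g) -> state g -> {ffun act g -> R}.

Definition valid_strat (g : game) (av : state g -> {set act g}) (sg : strat g) :=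
  forall h s, isdist (sg h s) /\ (forall a, a \notin av s -> sg h s a = 0).

Definition memoryless (g : game) (sg : strat g) : Prop :=
  forall h h' s, sg h s = sg h' s.

(* Collective strategy: one strategy per team player (independent randomisation). *)
Definition cstrat (g : game) := team g -> strat g.

Definition valid_cstrat (g : game) (tau : cstrat g) :=
  forall i, valid_strat (av_team i) (tau i).

Definition memoryless_c (g : game) (tau : cstrat g) := forall i, memoryless (tau i).

Definition trans (g : game) (tau : cstrat g) (sg : strat g)
    (h : seq (state g)) (s s' : state g) : R :=
  \sum_(f : {ffun team g -> act g}) \sum_(b : act g)
     (\prod_(i : team g) tau i h s (f i)) * sg h s b * delta s f b s'.

Fixpoint reach_within (g : game) (tau : cstrat g) (sg : strat g) (n : nat)
    (h : seq (state g)) (s : state g) : R :=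
  if s \in target g then 1 else
  match n with
  | 0 => 0
  | n'.+1 => \sum_(s' : state g) trans tau sg h s s' * reach_within tau sg n' (rcons h s) s'
  end.

(* P_{(tau, sigma)}(reach T) from s0: by continuity of the measure, the supremum
   (= limit of the nondecreasing sequence) of the probabilities of reaching T
   within n steps. *)
Definition reach_prob (g : game) (tau : cstrat g) (sg : strat g) : R :=
  sup (range (fun n => reach_within tau sg n [::] (s0 g))).

Definition inf_mless_opp (g : game) (tau : cstrat g) : R :=
  inf [set p | exists sg : strat g,
        [/\ valid_strat (fun s : state g => av_opp s) sg, memoryless sg & p = reach_prob tau sg]].

Definition sup_mless_team (g : game) : R :=
  sup [set p | exists tau : cstrat g,
        [/\ valid_cstrat tau, memoryless_c tau & p = inf_mless_opp tau]].

End Games.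

From HB Require Import structures.
From mathcomp Require Import all_boot all_order all_algebra.
From mathcomp Require Import boolp classical_sets reals.
From mathcomp Require Import ring lra.
Set Implicit Arguments. Unset Strict Implicit. Unset Printing Implicit Defensive.
Import Order.TTheory GRing.Theory Num.Theory.
Local Open Scope ring_scope.

(* Two team players must both play the complement of the opponent's bit at a
   matching state, which a fair coin lets the play reach either directly or
   after a detour.  With memory the team coordinates on the path taken: both
   players play [true] after the detour and [false] otherwise.  A memoryless
   opponent plays the same mixed bit on both paths, so it loses with
   probability 1/2.  A memoryless team randomises its players independently,
   say with biases [x] and [y]; one of [x y] and [(1 - x) (1 - y)] is at most
   1/4, and the opponent always playing the corresponding bit holds the team
   to 1/4. *)

Lemma sum_prod_all_eq (R : comNzRingType) (I A : finType) (p : I -> A -> R) (a : A) :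
  \sum_(f : {ffun I -> A}) (\prod_i p i (f i)) * [forall i, f i == a]%:R =
  \prod_i p i a.
Proof.
have p_a i : p i a = \sum_x p i x * (x == a)%:R.
  rewrite (bigD1 a) //= eqxx mulr1 big1 ?addr0 // => x /negbTE ->.
  by rewrite mulr0.
rewrite (eq_bigr _ (fun i _ => p_a i)) bigA_distr_bigA /=.
apply: eq_bigr => f _; rewrite big_split /=; congr (_ * _).
have [/forallP fa | ] := boolP [forall i, f i == a].
  by rewrite big1 // => i _; rewrite fa.
by rewrite negb_forall => /existsP[i /negbTE fi]; rewrite (bigD1 i) //= fi mul0r.
Qed.

Lemma prod_or_prod_compl_le_quarter (R : realFieldType) (x y : R) :
  0 <= x <= 1 -> 0 <= y <= 1 -> x * y <= 1/4 \/ (1 - x) * (1 - y) <= 1/4.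
Proof.
move=> /andP[x0 x1] /andP[y0 y1].
have hx : x * (1 - x) <= 1/4 by have := sqr_ge0 (x - 1/2); nra.
have hy : y * (1 - y) <= 1/4 by have := sqr_ge0 (y - 1/2); nra.
have prod_le : (x * y) * ((1 - x) * (1 - y)) <= 1/16.
  rewrite mulrACA; apply: le_trans (ler_pM _ _ hx hy) _;
    rewrite ?mulr_ge0 ?subr_ge0 //; lra.
have [xy_le | xy_gt] := leP (x * y) (1/4); [by left | right].
by move: ((1 - x) * (1 - y)) (x * y) prod_le xy_gt => v u; nra.
Qed.

Lemma bool_dist_prod_le_quarter (R : realType) (p q : {ffun bool -> R}) :
  isdist p -> isdist q -> exists b, p b * q b <= 1/4.
Proof.
move=> [p0 +] [q0 +]; rewrite !big_bool => /= p1 q1.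
have p_true : p true = 1 - p false by rewrite -p1 addrK.
have q_true : q true = 1 - q false by rewrite -q1 addrK.
have p_false : 0 <= p false <= 1 by rewrite p0 -p1 lerDr p0.
have q_false : 0 <= q false <= 1 by rewrite q0 -q1 lerDr q0.
have [le_false | le_true] := prod_or_prod_compl_le_quarter p_false q_false.
  by exists false.
by exists true; rewrite p_true q_true.
Qed.

Section Distributions.
Variables (R : realType) (X : finType).

Definition dirac (x : X) : {ffun X -> R} := [ffun y => (y == x)%:R].

Definition coin (x y : X) : {ffun X -> R} := [ffun z => (dirac x z + dirac y z) / 2].

Definition uniform (A : {set X}) : {ffun X -> R} :=
  [ffun x => if x \in A then #|A|%:R^-1 else 0].

Lemma sum_dirac x (r : X -> R) : \sum_y dirac x y * r y = r x.
Proof.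
rewrite (bigD1 x) //= ffunE eqxx mul1r big1 ?addr0 // => y /negbTE yx.
by rewrite ffunE yx mul0r.
Qed.

Lemma sum_coin x y (r : X -> R) : \sum_z coin x y z * r z = (r x + r y) / 2.
Proof.
under eq_bigr do rewrite ffunE mulrAC mulrDl.
by rewrite -big_distrl /= big_split /= !sum_dirac.
Qed.

Lemma dirac_dist x : isdist (dirac x).
Proof.
split; first by move=> y; rewrite ffunE ler0n.
by rewrite -[RHS](sum_dirac x (fun=> 1)); apply: eq_bigr => y _; rewrite mulr1.
Qed.

Lemma coin_dist x y : isdist (coin x y).
Proof.
split; first by move=> z; rewrite ffunE divr_ge0 ?addr_ge0 // ffunE ler0n.
have := sum_coin x y (fun=> 1); under eq_bigr do rewrite mulr1.
by move=> ->; lra.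
Qed.

Lemma uniform_dist (A : {set X}) : (0 < #|A|)%N -> isdist (uniform A).
Proof.
move=> A_gt0; split=> [x | ]; first by rewrite ffunE; case: ifP; rewrite ?invr_ge0.
rewrite (eq_bigr (fun x => if x \in A then #|A|%:R^-1 else 0)) => [|x _]; last first.
  by rewrite ffunE.
by rewrite -big_mkcond sumr_const -(mulr_natr #|A|%:R^-1) mulVf // pnatr_eq0 -lt0n.
Qed.

Lemma uniform_out (A : {set X}) x : x \notin A -> uniform A x = 0.
Proof. by rewrite ffunE => /negbTE ->. Qed.

End Distributions.

Section Plays.
Variables (R : realType) (g : game R).
Implicit Types (tau : cstrat g) (sg : strat g).

Definition profile_weight (tau : cstrat g) (sg : strat g) h s
    (f : {ffun team g -> act g}) (b : act g) : R :=
  (\prod_i tau i h s (f i)) * sg h s b.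

Lemma trans_expectation tau sg h s (r : state g -> R) :
  \sum_s' trans tau sg h s s' * r s' =
  \sum_f \sum_b profile_weight tau sg h s f b * \sum_s' delta s f b s' * r s'.
Proof.
under eq_bigr do rewrite big_distrl /=.
rewrite exchange_big /=; apply: eq_bigr => f _.
under eq_bigr do rewrite big_distrl /=.
rewrite exchange_big /=; apply: eq_bigr => b _.
by rewrite big_distrr /=; apply: eq_bigr => s' _; rewrite mulrA.
Qed.

Lemma reach_within_step tau sg n h s : s \notin target g ->
  reach_within tau sg n.+1 h s =
  \sum_s' trans tau sg h s s' * reach_within tau sg n (rcons h s) s'.
Proof. by move=> /negbTE /= ->. Qed.

Lemma reach_prob_le tau sg c :
  (forall n, reach_within tau sg n [::] (s0 g) <= c) -> reach_prob tau sg <= c.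
Proof.
move=> le_c; apply: ge_sup; first by exists (reach_within tau sg 0 [::] (s0 g)), 0%N.
by move=> _ [n _ <-].
Qed.

Definition uniform_strat (av : state g -> {set act g}) : strat g :=
  fun _ s => uniform R (av s).

Lemma uniform_strat_valid (av : state g -> {set act g}) :
  (forall s, 0 < #|av s|)%N -> valid_strat av (uniform_strat av).
Proof. by move=> av_gt0 h s; split; [apply: uniform_dist | apply: uniform_out]. Qed.

Hypothesis g_wf : wf_game g.

Section Profile.
Variables (tau : cstrat g) (sg : strat g).
Hypotheses (tau_valid : valid_cstrat tau) (sg_valid : valid_strat (@av_opp R g) sg).

Lemma profile_weight_ge0 h s f b : 0 <= profile_weight tau sg h s f b.
Proof.
apply: mulr_ge0; last by case: (sg_valid h s) => [[->]].
by apply: prodr_ge0 => i _; case: (tau_valid i h s) => [[->]].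
Qed.

Lemma profile_weight_unavailable h s f b :
  ~~ available_profile s f b -> profile_weight tau sg h s f b = 0.
Proof.
rewrite /profile_weight negb_and negb_forall => /orP[/existsP[i fi] | b_out].
  have [_ /(_ _ fi) tau0] := tau_valid i h s.
  by rewrite (bigD1 i) //= tau0 !mul0r.
by have [_ /(_ _ b_out) ->] := sg_valid h s; rewrite mulr0.
Qed.

Lemma sum_profile_weight h s : \sum_f \sum_b profile_weight tau sg h s f b = 1.
Proof.
have [[_ sg_sum1] _] := sg_valid h s.
under eq_bigr do rewrite -big_distrr /= sg_sum1 mulr1.
rewrite -(bigA_distr_bigA (fun i a => tau i h s a)) /=.
by apply: big1 => i _; case: (tau_valid i h s) => [[_ ->]].
Qed.

Lemma trans_expectation_const h s (r : state g -> R) c :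
  (forall f b, available_profile s f b -> \sum_s' delta s f b s' * r s' = c) ->
  \sum_s' trans tau sg h s s' * r s' = c.
Proof.
move=> rc; rewrite trans_expectation.
transitivity (\sum_f \sum_b profile_weight tau sg h s f b * c).
  apply: eq_bigr => f _; apply: eq_bigr => b _.
  have [/rc -> // | /profile_weight_unavailable ->] := boolP (available_profile s f b).
  by rewrite !mul0r.
under eq_bigr do rewrite -big_distrl /=.
by rewrite -big_distrl /= sum_profile_weight mul1r.
Qed.

Lemma trans_ge0 h s s' : 0 <= trans tau sg h s s'.
Proof.
apply: sumr_ge0 => f _; apply: sumr_ge0 => b _; rewrite -/(profile_weight tau sg h s f b).
have [fb | /profile_weight_unavailable ->] := boolP (available_profile s f b).
  have [_ [_ [delta_dist _]]] := g_wf.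
  by rewrite mulr_ge0 ?profile_weight_ge0 //; case: (delta_dist s f b fb) => ->.
by rewrite mul0r.
Qed.

Lemma reach_within_ge0 n h s : 0 <= reach_within tau sg n h s.
Proof.
elim: n h s => [|n IH] h s /=; case: ifP => // _.
by apply: sumr_ge0 => s' _; rewrite mulr_ge0 ?trans_ge0.
Qed.

Lemma reach_within_le1 n h s : reach_within tau sg n h s <= 1.
Proof.
elim: n h s => [|n IH] h s /=; case: ifP => // _.
rewrite -[X in _ <= X](@trans_expectation_const h s (fun=> 1)) => [|f b fb].
  by apply: ler_sum => s' _; rewrite ler_wpM2l ?trans_ge0.
have [_ [_ [delta_dist _]]] := g_wf.
by under eq_bigr do rewrite mulr1; case: (delta_dist s f b fb).
Qed.

Lemma reach_within_le_reach_prob n :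
  reach_within tau sg n [::] (s0 g) <= reach_prob tau sg.
Proof.
apply: ub_le_sup; last by exists n.
by exists 1 => _ [m _ <-]; apply: reach_within_le1.
Qed.

Lemma reach_prob_ge0 : 0 <= reach_prob tau sg.
Proof. exact: le_trans (reach_within_ge0 0 _ _) (reach_within_le_reach_prob 0). Qed.

Lemma reach_within_le_superharmonic (V : state g -> R) :
  (forall s, s \in target g -> 1 <= V s) -> (forall s, 0 <= V s) ->
  (forall h s, s \notin target g -> \sum_s' trans tau sg h s s' * V s' <= V s) ->
  forall n h s, reach_within tau sg n h s <= V s.
Proof.
move=> V_target V_ge0 V_super; elim=> [|n IH] h s /=.
  by case: ifP => [/V_target | _].
case: ifP => [/V_target // | /negbT s_out].
apply: le_trans (V_super h s s_out); apply: ler_sum => s' _.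
by rewrite ler_wpM2l ?trans_ge0.
Qed.

End Profile.

Lemma inf_mless_opp_le tau sg :
  valid_cstrat tau -> valid_strat (@av_opp R g) sg -> memoryless sg ->
  inf_mless_opp tau <= reach_prob tau sg.
Proof.
move=> tau_valid sg_valid sg_mless; apply: ge_inf; last by exists sg.
by exists 0 => _ [sg' [sg'_valid _ ->]]; apply: reach_prob_ge0.
Qed.

Lemma inf_mless_opp_ge tau c :
  (forall sg, valid_strat (@av_opp R g) sg -> memoryless sg -> c <= reach_prob tau sg) ->
  c <= inf_mless_opp tau.
Proof.
have [_ [av_opp_gt0 _]] := g_wf.
move=> c_le; apply: lb_le_inf.
  by exists (reach_prob tau (uniform_strat (@av_opp R g))), (uniform_strat (@av_opp R g));
    split=> //; apply: uniform_strat_valid.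
by move=> _ [sg [sg_valid sg_mless ->]]; apply: c_le.
Qed.

Lemma sup_mless_team_le c :
  (forall tau : cstrat g, valid_cstrat tau -> memoryless_c tau -> inf_mless_opp tau <= c) ->
  sup_mless_team g <= c.
Proof.
have [av_team_gt0 _] := g_wf.
pose tau0 : cstrat g := fun i => uniform_strat (av_team i).
move=> le_c; apply: ge_sup.
  by exists (inf_mless_opp tau0), tau0; split=> // i; apply: uniform_strat_valid.
by move=> _ [tau [tau_valid tau_mless ->]]; apply: le_c.
Qed.

End Plays.

Inductive node := Start | Detour | Match | Win | Lose.

Definition node_enc (s : node) : 'I_5 :=
  match s with
  | Start => @Ordinal 5 0 isT | Detour => @Ordinal 5 1 isT
  | Match => @Ordinal 5 2 isT | Win => @Ordinal 5 3 isT | Lose => @Ordinal 5 4 isT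
  end.

Definition node_dec (i : 'I_5) : node :=
  match nat_of_ord i with
  | 0 => Start | 1 => Detour | 2 => Match | 3 => Win | _ => Lose
  end.

Lemma node_encK : cancel node_enc node_dec. Proof. by case. Qed.

HB.instance Definition _ := Finite.copy node (can_type node_encK).

Section MatchingGame.
Variable R : realType.

Definition team_wins (f : {ffun bool -> bool}) (b : bool) := [forall i, f i == ~~ b].

Definition match_delta (s : node) (f : {ffun bool -> bool}) (b : bool) : {ffun node -> R} :=
  match s with
  | Start => coin R Detour Match
  | Detour => dirac R Match
  | Match => dirac R (if team_wins f b then Win else Lose)
  | Win => dirac R Win
  | Lose => dirac R Lose
  end.

Definition match_game : game R :=
  @Game R bool node bool (fun _ _ => [set: bool]%SET) (fun _ => [set: bool]%SET)
    match_delta [set Win] Start.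

Lemma match_game_wf : wf_game match_game.
Proof.
split; first by move=> i s; rewrite cardsT card_bool.
split; first by move=> s; rewrite cardsT card_bool.
split; first by move=> [] f b _; [exact: coin_dist | exact: dirac_dist ..].
move=> s f b s'; rewrite inE => /eqP -> _; rewrite inE => /negbTE s'_out.
by rewrite /= ffunE s'_out.
Qed.

Definition win_prob (tau : cstrat match_game) h (b : bool) : R :=
  \prod_i tau i h Match (~~ b).

Lemma exists_win_prob_le_quarter tau h :
  valid_cstrat tau -> exists b, win_prob tau h b <= 1/4.
Proof.
move=> tau_valid; have [[p_dist _] [q_dist _]] := (tau_valid true h Match, tau_valid false h Match).
have [b pq_le] := bool_dist_prod_le_quarter p_dist q_dist.
by exists (~~ b); rewrite /win_prob big_bool negbK.
Qed.

Section MatchingProfile.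
Variables (tau : cstrat match_game) (sg : strat match_game).
Hypotheses (tau_valid : valid_cstrat tau)
  (sg_valid : valid_strat (@av_opp R match_game) sg).

Lemma reach_within_Win n h : reach_within tau sg n h Win = 1.
Proof. by case: n => [|n] /=; rewrite inE eqxx. Qed.

Lemma trans_Start h (r : node -> R) :
  \sum_s' trans tau sg h Start s' * r s' = (r Detour + r Match) / 2.
Proof. by apply: trans_expectation_const => // f b _; apply: sum_coin. Qed.

Lemma trans_Detour h (r : node -> R) :
  \sum_s' trans tau sg h Detour s' * r s' = r Match.
Proof. by apply: trans_expectation_const => // f b _; apply: sum_dirac. Qed.

Lemma trans_Lose h (r : node -> R) :
  \sum_s' trans tau sg h Lose s' * r s' = r Lose.
Proof. by apply: trans_expectation_const => // f b _; apply: sum_dirac. Qed.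

Lemma reach_within_Lose n h : reach_within tau sg n h Lose = 0.
Proof.
elim: n h => [|n IH] h; first by rewrite /= inE.
by rewrite reach_within_step ?inE // trans_Lose IH.
Qed.

Lemma trans_Match h (r : node -> R) : r Lose = 0 ->
  \sum_s' trans tau sg h Match s' * r s' =
  r Win * \sum_b sg h Match b * win_prob tau h b.
Proof.
move=> r_Lose; rewrite trans_expectation.
transitivity (\sum_(f : {ffun bool -> bool}) \sum_b
    r Win * (sg h Match b * ((\prod_i tau i h Match (f i)) * (team_wins f b)%:R))).
  apply: eq_bigr => f _; apply: eq_bigr => b _; rewrite /= sum_dirac /profile_weight.
  by case: (team_wins f b); rewrite ?r_Lose /=; ring.
rewrite exchange_big big_distrr /=; apply: eq_bigr => b _.
by rewrite -!big_distrr /= /team_wins (sum_prod_all_eq (fun i x => tau i h Match x)).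
Qed.

End MatchingProfile.

Definition detour_cstrat : cstrat match_game := fun _ h _ => dirac R (Detour \in h).

Lemma detour_cstrat_valid : valid_cstrat detour_cstrat.
Proof. by move=> i h s; split=> [|a]; [exact: dirac_dist | rewrite inE]. Qed.

Lemma reach_prob_detour_ge sg :
  valid_strat (@av_opp R match_game) sg -> memoryless sg ->
  1/2 <= reach_prob detour_cstrat sg.
Proof.
move=> sg_valid sg_mless; have tau_valid := detour_cstrat_valid.
apply: le_trans (reach_within_le_reach_prob match_game_wf tau_valid sg_valid 3).
rewrite reach_within_step ?inE // trans_Start //.
rewrite !reach_within_step ?inE // trans_Detour // reach_within_step ?inE //.
rewrite !trans_Match ?reach_within_Lose // !reach_within_Win !mul1r.
rewrite (sg_mless _ [::]) (sg_mless (rcons [::] Start) [::]) /win_prob !big_bool /= !ffunE /=.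
have [[_ sg_sum1] _] := sg_valid [::] Match; rewrite big_bool /= in sg_sum1.
lra.
Qed.

Definition const_strat (b : bool) : strat match_game := fun _ _ => dirac R b.

Lemma const_strat_valid b : valid_strat (@av_opp R match_game) (const_strat b).
Proof. by move=> h s; split=> [|a]; [exact: dirac_dist | rewrite inE]. Qed.

Lemma reach_prob_const_strat_le tau b :
  valid_cstrat tau -> memoryless_c tau ->
  reach_prob tau (const_strat b) <= win_prob tau [::] b.
Proof.
move=> tau_valid tau_mless; have b_valid := const_strat_valid b.
set w := win_prob tau [::] b.
have w_ge0 : 0 <= w by apply: prodr_ge0 => i _; case: (tau_valid i [::] Match) => [[->]].
pose V s := match s with Win => 1 | Lose => 0 | _ => w end.
apply: reach_prob_le => n.
apply: (reach_within_le_superharmonic match_game_wf tau_valid b_valid (V := V)).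
- by move=> s; rewrite /= inE => /eqP ->.
- by case.
move=> h [] s_out.
- by rewrite trans_Start //=; lra.
- by rewrite trans_Detour.
- rewrite trans_Match //= mul1r sum_dirac.
  suff -> : win_prob tau h b = w by [].
  by rewrite /w /win_prob; under eq_bigr do rewrite (tau_mless _ h [::]).
- by rewrite /= inE eqxx in s_out.
- by rewrite trans_Lose.
Qed.

End MatchingGame.

Theorem theorem2 (R : realType) :
  exists (g : game R) (tau : cstrat g),
    [/\ wf_game g, valid_cstrat tau &
        inf_mless_opp tau > sup_mless_team g].
Proof.
have wf := match_game_wf R.
exists (match_game R), (@detour_cstrat R); split=> //; first exact: detour_cstrat_valid.
apply: (@le_lt_trans _ _ (1/4)).
  apply: sup_mless_team_le => // tau tau_valid tau_mless.
  have [b win_le] := exists_win_prob_le_quarter [::] tau_valid.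
  apply: le_trans (inf_mless_opp_le wf tau_valid (const_strat_valid b) _) _ => //.
  exact: le_trans (reach_prob_const_strat_le b tau_valid tau_mless) win_le.
apply: (@lt_le_trans _ _ (1/2)); first lra.
by apply: inf_mless_opp_ge => // sg; apply: reach_prob_detour_ge.
Qed.
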